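(* The algorithm $\mathcal{U}$ described in the context is wait-free: in every execution (implementation history) of $\mathcal{U}$, no process can invoke DoOp$(o)$ and then take infinitely many steps within DoOp$(o)$ without completing it (i.e. without executing line 14).
   Context: Model: an asynchronous shared-memory system with possibly infinitely many processes, any of which may crash, communicating via atomic shared objects. A fetch-and-increment (F\&I) object stores an integer; F\&I$(C)$ atomically returns the current value and increments it. A generalized-compare-and-swap (GCAS) object $O$ stores a value and supports Read$(O)$ and GCAS$(c, O, v_1, v_2)$, which atomically does: if $c(\text{current value of } O, v_1)$ holds then set $O := v_2$ and return true, else return false. Tuples are compared componentwise for $=$; GCAS$(>, A, (t,-,-), v)$ succeeds iff the time field of $A$ is strictly greater than $t$. Implemented type $\mathcal{T} = (OP, RES, Q, \delta)$ with $\delta \subseteq Q\times OP\times Q\times RES$ and initial state $s_0$; a procedure $apply_{\mathcal{T}}(o,s)$ returns some $(s',r)$ with $(s,o,s',r)\in\delta$. $NULL$ is a value different from every response of $\mathcal{T}$, and $NOOP$ is a name different from every operation of $\mathcal{T}$. Algorithm $\mathcal{U}$: each process $p$ owns a GCAS object $H_p$ with fields $(time, response)$. Shared objects: F\&I object $C$, initially $1$; GCAS object $A$ with fields $(time, op, ptr)$, initially $(0, NOOP, h(NOOP))$, where $h(NOOP)$ is a pointer to an immutable location containing $(0,\perp)$; GCAS object $S$ with fields $(time, state, response, ptr)$, initially $(0, s_0, \perp, h(NOOP))$. Process $p$ performs operation $o$ by calling DoOp$(o)$: (1) DoOp$(o)$ invoked; (2) $t := $ F\&I$(C)$; (3) $H_p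 := (t, NULL)$; (4) while $H_p = (t, NULL)$ do: (5) $(t^*, s^*, r^*, roptr^* ) := S$; (6) GCAS$(=, *roptr^*, (t^*, NULL), (t^*, r^* ))$; (7) GCAS$(>, A, (t,-,-), (t, o, \&H_p))$; (8) $(t', o', roptr') := A$; (9) $(\hat t, \hat r) := *roptr'$; (10) if $(\hat t,\hat r) = (t', NULL)$ then (11) $(s', r') := apply_{\mathcal{T}}(o', s^* )$; (12) GCAS$(=, S, (t^*,s^*,r^*,roptr^* ), (t', s', r', roptr'))$; (13) else GCAS$(=, A, (t', o', roptr'), (t, o, \&H_p))$; end while; (14) return $H_p.response$. Lines 1 and 14 are the invocation and response steps. *)

(* an operational model of algorithm U (asynchronous shared
   memory, processes indexed by nat, crashes = simply not being scheduled). *)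
From Stdlib Require Import Arith.

Set Implicit Arguments.

Section AlgoU.
Variables (OP RES Q : Type).

Inductive resp := RNull | RBot | RVal (r : RES).
Inductive aop := ANoop | AOp (o : OP).
(* pointers: h(NOOP) (immutable location holding (0,bottom)) or &H_q *)
Inductive ptr := PNoop | PH (q : nat).

Definition Aval := (nat * aop * ptr)%type.          (* (time, op, ptr) *)
Definition Sval := (nat * Q * resp * ptr)%type.     (* (time, state, response, ptr) *)
Definition Hval := (nat * resp)%type.               (* (time, response) *)

(* program counter of a process together with its local variables;
   AtK means "the next step to execute is line K". *)
Inductive lstate :=
| Idle                                                  (* not inside DoOp *)
| At2 (o : OP)
| At3 (o : OP) (t : nat)
| At4 (o : OP) (t : nat)
| At5 (o : OP) (t : nat)
| At6 (o : OP) (t : nat) (snap : Sval)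
| At7 (o : OP) (t : nat) (snap : Sval)
| At8 (o : OP) (t : nat) (snap : Sval)
| At9 (o : OP) (t : nat) (snap : Sval) (a : Aval)
| At10 (o : OP) (t : nat) (snap : Sval) (a : Aval) (hv : Hval)
| At11 (o : OP) (t : nat) (snap : Sval) (a : Aval)
| At12 (o : OP) (t : nat) (snap : Sval) (a : Aval) (s' : Q) (r' : RES)
| At13 (o : OP) (t : nat) (snap : Sval) (a : Aval)
| At14 (o : OP) (t : nat).

Record config := Config {
  cC : nat;                 (* F&I object C *)
  cA : Aval;
  cS : Sval;
  cH : nat -> Hval;         (* GCAS objects H_p *)
  cL : nat -> lstate
}.

Definition upd {T : Type} (f : nat -> T) (i : nat) (v : T) : nat -> T :=
  fun j => if Nat.eqb j i then v else f j.

Definition setL (c : config) (p : nat) (l : lstate) : config :=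
  Config (cC c) (cA c) (cS c) (cH c) (upd (cL c) p l).

Definition deref (c : config) (x : ptr) : Hval :=
  match x with PNoop => (0, RBot) | PH q => cH c q end.

(* effect of GCAS(=, O, v1, v2) on the value of O: cur -> new *)
Definition gcas_eq {T : Type} (cur v1 v2 new : T) : Prop :=
  (cur = v1 /\ new = v2) \/ (cur <> v1 /\ new = cur).

Variable delta : Q -> OP -> Q -> RES -> Prop.

(* one atomic step of process p (one line of the code) *)
Definition stepP (p : nat) (c c' : config) : Prop :=
  match cL c p with
  | Idle => exists o, c' = setL c p (At2 o)
  | At2 o =>
      c' = Config (S (cC c)) (cA c) (cS c) (cH c) (upd (cL c) p (At3 o (cC c)))
  | At3 o t =>
      c' = Config (cC c) (cA c) (cS c) (upd (cH c) p (t, RNull)) (upd (cL c) p (At4 o t))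
  | At4 o t =>
      (cH c p = (t, RNull) /\ c' = setL c p (At5 o t)) \/
      (cH c p <> (t, RNull) /\ c' = setL c p (At14 o t))
  | At5 o t => c' = setL c p (At6 o t (cS c))
  | At6 o t snap =>
      let '(ts, ss, rs, rp) := snap in
      match rp with
      | PNoop => c' = setL c p (At7 o t snap)  (* immutable (0,bot): never (ts,NULL) *)
      | PH q => exists nv, gcas_eq (cH c q) (ts, RNull) (ts, rs) nv /\
          c' = Config (cC c) (cA c) (cS c) (upd (cH c) q nv) (upd (cL c) p (At7 o t snap))
      end
  | At7 o t snap =>
      let '(ta, _, _) := cA c in
      let nA := if Nat.ltb t ta then (t, AOp o, PH p) else cA c in
      c' = Config (cC c) nA (cS c) (cH c) (upd (cL c) p (At8 o t snap))
  | At8 o t snap => c' = setL c p (At9 o t snap (cA c))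
  | At9 o t snap a =>
      let '(_, _, rp') := a in c' = setL c p (At10 o t snap a (deref c rp'))
  | At10 o t snap a hv =>
      let '(t', _, _) := a in
      (hv = (t', RNull) /\ c' = setL c p (At11 o t snap a)) \/
      (hv <> (t', RNull) /\ c' = setL c p (At13 o t snap a))
  | At11 o t snap a =>
      let '(_, o', _) := a in
      let '(_, ss, _, _) := snap in
      match o' with
      | ANoop => False   (* unreachable: apply_T is only defined on operations of T *)
      | AOp op => exists s' r', delta ss op s' r' /\ c' = setL c p (At12 o t snap a s' r')
      end
  | At12 o t snap a s' r' =>
      let '(t', _, rp') := a in
      exists nS, gcas_eq (cS c) snap (t', s', RVal r', rp') nS /\
        c' = Config (cC c) (cA c) nS (cH c) (upd (cL c) p (At4 o t))
  | At13 o t snap a =>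
      exists nA, gcas_eq (cA c) a (t, AOp o, PH p) nA /\
        c' = Config (cC c) nA (cS c) (cH c) (upd (cL c) p (At4 o t))
  | At14 o t => c' = setL c p Idle
  end.

(* an execution step: either process p takes a step, or nothing happens
   (stuttering; allows finite executions to be padded) *)
Definition stepE (e : option nat) (c c' : config) : Prop :=
  match e with None => c' = c | Some p => stepP p c c' end.

Definition is_at14 (l : lstate) : Prop :=
  match l with At14 _ _ => True | _ => False end.

End AlgoU.

Definition init (OP RES Q : Type) (s0 : Q) (H0 : nat -> Hval RES) : config OP RES Q :=
  Config 1 (0, ANoop OP, PNoop) (0, s0, RBot RES, PNoop) H0 (fun _ => Idle OP RES Q).

(* Strong induction on the F&I timestamp t of the operation.  Suppose a fairly
   scheduled process p with timestamp t loops forever; then H_p stays (t, NULL).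
   By induction every process with an older timestamp eventually finishes or is
   no longer scheduled, so from some point on every other active process is
   younger than p.  From then on A can only receive p's own entry (line 7 keeps
   the oldest, line 13 needs an answered entry), and an older entry left in A
   is either answered, and then replaced by p at line 13, or never answered.
   Either way A eventually holds forever some entry E that is never answered.
   Then S never holds E (p's helping at line 6 would answer it), so every pass
   of p through the loop reads E and fails its GCAS on S at line 12: S changed
   meanwhile, and every change of S is made by a process whose read of A is not
   E.  The number of such processes never increases and drops at each pass. *)
From Stdlib Require Import Arith Lia Classical ClassicalEpsilon.

Fixpoint count_below (P : nat -> Prop) (N : nat) : nat := match N with
  | 0 => 0
  | S m => count_below P m + (if excluded_middle_informative (P m) then 1 else 0) end.

Lemma count_below_mono P P' N : (forall q, q < N -> P' q -> P q) -> count_below P' N <= count_below P N.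
Proof.
  induction N as [|N IHN]; simpl; intros H; auto.
  assert (count_below P' N <= count_below P N) by (apply IHN; intros; apply H; auto; lia).
  destruct (excluded_middle_informative (P' N)); destruct (excluded_middle_informative (P N)); try lia.
  exfalso; eauto.
Qed.

Lemma count_below_lt P P' N q0 : (forall q, q < N -> P' q -> P q) -> q0 < N -> P q0 -> ~ P' q0 ->
  count_below P' N < count_below P N.
Proof.
  induction N as [|N IHN]; simpl; intros H Hq HP HP'; [lia|].
  destruct (Nat.eq_dec q0 N) as [->|Hne].
  - assert (count_below P' N <= count_below P N) by (apply count_below_mono; intros; apply H; auto; lia).
    destruct (excluded_middle_informative (P' N)); destruct (excluded_middle_informative (P N)); try lia;
    contradiction.
  - assert (count_below P' N < count_below P N) by (apply IHN; auto; try lia; intros; apply H; auto; lia).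
    destruct (excluded_middle_informative (P' N)); destruct (excluded_middle_informative (P N)); try lia.
    exfalso; eauto.
Qed.

Section AlgorithmU.
Variables (OP RES Q : Type).
Variable delta : Q -> OP -> Q -> RES -> Prop.

Local Arguments Idle {OP RES Q}.
Local Arguments At2 {OP RES Q}.
Local Arguments At3 {OP RES Q}.
Local Arguments At4 {OP RES Q}.
Local Arguments At5 {OP RES Q}.
Local Arguments At6 {OP RES Q}.
Local Arguments At7 {OP RES Q}.
Local Arguments At8 {OP RES Q}.
Local Arguments At9 {OP RES Q}.
Local Arguments At10 {OP RES Q}.
Local Arguments At11 {OP RES Q}.
Local Arguments At12 {OP RES Q}.
Local Arguments At13 {OP RES Q}.
Local Arguments At14 {OP RES Q}.
Local Arguments RNull {RES}.
Local Arguments RBot {RES}.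
Local Arguments ANoop {OP}.

Notation L := (lstate OP RES Q).
Notation Cf := (config OP RES Q).

Definition op_time (l : L) : option (OP * nat) := match l with
 | Idle | At2 _ => None
 | At3 o t | At4 o t | At5 o t | At6 o t _ | At7 o t _ | At8 o t _ | At9 o t _ _
 | At10 o t _ _ _ | At11 o t _ _ | At12 o t _ _ _ _ | At13 o t _ _ | At14 o t => Some (o, t) end.

Definition time_of (l : L) : option nat := match l with
 | Idle | At2 _ => None
 | At3 _ t | At4 _ t | At5 _ t | At6 _ t _ | At7 _ t _ | At8 _ t _ | At9 _ t _ _
 | At10 _ t _ _ _ | At11 _ t _ _ | At12 _ t _ _ _ _ | At13 _ t _ _ | At14 _ t => Some t end.

Definition snap_of (l : L) : option (Sval RES Q) := match l with
 | At6 _ _ s | At7 _ _ s | At8 _ _ s | At9 _ _ s _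
 | At10 _ _ s _ _ | At11 _ _ s _ | At12 _ _ s _ _ _ | At13 _ _ s _ => Some s
 | _ => None end.

(* The snapshot of S once line 6 has helped its operation. *)
Definition helped_snap_of (l : L) : option (Sval RES Q) := match l with
 | At7 _ _ s | At8 _ _ s | At9 _ _ s _
 | At10 _ _ s _ _ | At11 _ _ s _ | At12 _ _ s _ _ _ | At13 _ _ s _ => Some s
 | _ => None end.

Definition read_A_of (l : L) : option (Aval OP) := match l with
 | At9 _ _ _ a | At10 _ _ _ a _ | At11 _ _ _ a | At12 _ _ _ a _ _ | At13 _ _ _ a => Some a
 | _ => None end.

(* An operation is identified by its (time, response pointer) pair. *)
Definition S_entry (s : Sval RES Q) : nat * ptr := (fst (fst (fst s)), snd s).
Definition A_entry (a : Aval OP) : nat * ptr := (fst (fst a), snd a).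

Definition visible (c : Cf) (e : nat * ptr) : Prop :=
  e = A_entry (cA c) \/ e = S_entry (cS c) \/
  (exists q s, snap_of (cL c q) = Some s /\ e = S_entry s) \/
  (exists q a, read_A_of (cL c q) = Some a /\ e = A_entry a).

Definition answered (c : Cf) (e : nat * ptr) : Prop := deref c (snd e) <> (fst e, RNull).

Definition carries_response (s : Sval RES Q) : Prop := snd s = PNoop \/ snd (fst s) <> RNull.

Definition read_ok (c : Cf) (l : L) : Prop := match l with
 | At13 _ _ _ a => answered c (A_entry a)
 | At10 _ _ _ a hv => hv <> (fst (fst a), RNull) -> answered c (A_entry a)
 | _ => True end.

Record inv (c : Cf) : Prop := {
  inv_time_lt_C : forall q t, time_of (cL c q) = Some t -> t < cC c;
  inv_time_inj : forall q r t, time_of (cL c q) = Some t -> time_of (cL c r) = Some t -> q = r;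
  inv_visible_lt_C : forall e, visible c e -> fst e < cC c;
  (* line 3 resets H_q, and this must not erase the answer of a visible operation *)
  inv_visible_before_reset : forall q o t e,
    cL c q = At3 o t -> visible c e -> snd e = PH q -> fst e < t;
  inv_S_carries : carries_response (cS c);
  inv_snap_carries : forall q s, snap_of (cL c q) = Some s -> carries_response s;
  inv_helped_answered : forall q s, helped_snap_of (cL c q) = Some s -> answered c (S_entry s);
  inv_read_ok : forall q, read_ok c (cL c q)
}.

Lemma upd_eq {T} (f : nat -> T) i v : upd f i v i = v.
Proof. unfold upd. now rewrite Nat.eqb_refl. Qed.
Lemma upd_neq {T} (f : nat -> T) i v j : j <> i -> upd f i v j = f j.
Proof. unfold upd. intros H. destruct (Nat.eqb_spec j i); congruence. Qed.

Ltac destruct_lets := repeat match goal with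
  | H : context [let '(_,_) := ?x in _] |- _ => destruct x
  | H : context [match ?x with PNoop => _ | PH _ => _ end] |- _ => destruct x
  | H : context [match ?x with ANoop => _ | AOp _ => _ end] |- _ => destruct x
  end.
Ltac destruct_hyps := repeat match goal with
  | H : exists _, _ |- _ => destruct H
  | H : _ /\ _ |- _ => destruct H
  | H : _ \/ _ |- _ => destruct H
  | H : gcas_eq _ _ _ _ |- _ => destruct H
  end.
Ltac case_step Hs Hl :=
  unfold stepP in Hs; destruct (cL _ _) eqn:Hl in Hs; destruct_lets; destruct_hyps; subst; simpl in *.
Ltac case_upd := repeat match goal with
  | H : context [upd _ ?p _ ?q] |- _ => unfold upd in H; destruct (Nat.eqb_spec q p)
  | |- context [upd _ ?p _ ?q] => unfold upd; destruct (Nat.eqb_spec q p)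
  end.
Ltac simpl_options := repeat match goal with
  | H : Some _ = Some _ |- _ => injection H as H; subst
  | H : None = Some _ |- _ => discriminate H
  | H : Some _ = None |- _ => discriminate H
  | H : context [if ?b then _ else _] |- _ => destruct b
  | |- context [if ?b then _ else _] => destruct b
  end.

Lemma step_other p c c' q : stepP delta p c c' -> q <> p -> cL c' q = cL c q.
Proof. intros Hs Hq. case_step Hs Hl; try (rewrite upd_neq; auto); contradiction. Qed.

Lemma step_C_mono p c c' : stepP delta p c c' -> cC c <= cC c'.
Proof. intros Hs. case_step Hs Hl; lia. Qed.

Lemma step_time_of p c c' : stepP delta p c c' ->
  time_of (cL c' p) = time_of (cL c p) \/ time_of (cL c' p) = None \/
  (time_of (cL c p) = None /\ time_of (cL c' p) = Some (cC c)).
Proof. intros Hs. case_step Hs Hl; rewrite ?upd_eq; simpl; auto; try contradiction; rewrite Hl; auto. Qed.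

Lemma step_to_line3 p c c' o t : stepP delta p c c' -> cL c' p = At3 o t -> cL c p = At2 o /\ t = cC c.
Proof.
  intros Hs H. case_step Hs Hl; rewrite ?upd_eq in H; try discriminate; try contradiction.
  injection H as -> ->; auto.
Qed.

Lemma step_op_time p c c' x : stepP delta p c c' -> op_time (cL c p) = Some x ->
  ~ is_at14 (cL c p) -> op_time (cL c' p) = Some x.
Proof.
  intros Hs Ho H14. case_step Hs Hl; rewrite ?upd_eq; rewrite ?Hl in Ho, H14; simpl in *;
  try contradiction; try discriminate; auto.
Qed.

Lemma op_time_time_of (l : L) o t : op_time l = Some (o, t) -> time_of l = Some t.
Proof. destruct l; simpl; intros H; try discriminate; injection H as -> ->; auto. Qed.

Lemma time_of_op_time (l : L) t : time_of l = Some t -> exists o, op_time l = Some (o, t).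
Proof. destruct l; simpl; intros H; try discriminate; injection H as ->; eauto. Qed.

Lemma visible_snap c q s : snap_of (cL c q) = Some s -> visible c (S_entry s).
Proof. intros H. unfold visible. eauto 10. Qed.

Lemma visible_read_A c q a : read_A_of (cL c q) = Some a -> visible c (A_entry a).
Proof. intros H. unfold visible. eauto 10. Qed.

Lemma helped_snap_snap (l : L) s : helped_snap_of l = Some s -> snap_of l = Some s.
Proof. destruct l; simpl; congruence. Qed.

Lemma step_visible p c c' e : stepP delta p c c' -> visible c' e ->
  visible c e \/ (exists t, time_of (cL c p) = Some t /\ e = (t, PH p)).
Proof.
  intros Hs He. unfold visible in *.
  case_step Hs Hl; try contradiction; destruct_hyps; case_upd; subst; simpl in *; simpl_options; simpl in *;
  first [ solve [eauto 10]
        | solve [left; right; right; left; exists p; eexists; rewrite Hl; simpl; eauto]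
        | solve [left; right; right; right; exists p; eexists; rewrite Hl; simpl; eauto]
        | solve [right; eexists; rewrite Hl; simpl; eauto]
        | idtac ].
Qed.

(* Only line 3 can overwrite an answer, and it only touches entries newer than anything visible. *)
Lemma step_answered p c c' e : inv c -> stepP delta p c c' -> visible c e -> answered c e -> answered c' e.
Proof.
  intros HI Hs He Hd. destruct e as [te [|r]]; unfold answered, deref in *; simpl in *.
  { case_step Hs Hl; auto. }
  case_step Hs Hl; try contradiction; simpl in *; auto; case_upd; subst; auto.
  - pose proof (inv_visible_before_reset _ HI _ _ _ _ Hl He eq_refl) as Hlt. simpl in Hlt.
    intros E; injection E; lia.
  - intros E; injection E as E1 E2; subst. congruence.
Qed.

Lemma step_read_ok p c c' q : inv c -> stepP delta p c c' -> read_ok c (cL c q) -> read_ok c' (cL c q).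
Proof.
  intros HI Hs H. destruct (cL c q) eqn:Hq; simpl in *; auto.
  - intros Hh. eapply step_answered; eauto. eapply (visible_read_A c q); rewrite Hq; reflexivity.
  - eapply step_answered; eauto. eapply (visible_read_A c q); rewrite Hq; reflexivity.
Qed.

Lemma time_lt_C_step p c c' q t : inv c -> stepP delta p c c' -> time_of (cL c' q) = Some t -> t < cC c'.
Proof.
  intros HI Hs Ht. pose proof (step_C_mono _ _ _ Hs) as HC.
  destruct (Nat.eqb_spec q p) as [->|Hne].
  - pose proof (inv_time_lt_C _ HI p) as H1.
    case_step Hs Hl; rewrite ?upd_eq in Ht; simpl in Ht; simpl_options; try contradiction;
    try (rewrite Hl in H1; simpl in H1; specialize (H1 _ eq_refl)); lia.
  - rewrite (step_other _ _ _ _ Hs Hne) in Ht. specialize (inv_time_lt_C _ HI _ _ Ht). lia.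
Qed.

Lemma time_inj_step p c c' q r t : inv c -> stepP delta p c c' ->
  time_of (cL c' q) = Some t -> time_of (cL c' r) = Some t -> q = r.
Proof.
  intros HI Hs.
  assert (Hp : forall r t, r <> p -> time_of (cL c' p) = Some t -> time_of (cL c' r) = Some t -> p = r).
  { intros r' t' Hne Hp Hr. rewrite (step_other _ _ _ _ Hs Hne) in Hr.
    destruct (step_time_of _ _ _ Hs) as [HT|[HT|[_ HT]]]; rewrite HT in Hp; try discriminate.
    - exact (inv_time_inj _ HI _ _ _ Hp Hr).
    - injection Hp as <-. specialize (inv_time_lt_C _ HI _ _ Hr). lia. }
  intros Hq Hr.
  destruct (Nat.eqb_spec q p) as [->|Hq']; destruct (Nat.eqb_spec r p) as [->|Hr']; auto.
  - eapply Hp; eauto.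
  - symmetry; eapply Hp; eauto.
  - rewrite (step_other _ _ _ _ Hs Hq') in Hq. rewrite (step_other _ _ _ _ Hs Hr') in Hr.
    exact (inv_time_inj _ HI _ _ _ Hq Hr).
Qed.

Lemma visible_lt_C_step p c c' e : inv c -> stepP delta p c c' -> visible c' e -> fst e < cC c'.
Proof.
  intros HI Hs He. pose proof (step_C_mono _ _ _ Hs) as HC.
  destruct (step_visible _ _ _ _ Hs He) as [He'|[t [Ht ->]]].
  - specialize (inv_visible_lt_C _ HI _ He'). lia.
  - specialize (inv_time_lt_C _ HI _ _ Ht). simpl. lia.
Qed.

Lemma visible_before_reset_step p c c' q o t e : inv c -> stepP delta p c c' ->
  cL c' q = At3 o t -> visible c' e -> snd e = PH q -> fst e < t.
Proof.
  intros HI Hs Hq He Hx. destruct (Nat.eqb_spec q p) as [->|Hne].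
  - destruct (step_to_line3 _ _ _ _ _ Hs Hq) as [Hl ->].
    destruct (step_visible _ _ _ _ Hs He) as [He'|[t' [Ht ->]]].
    + exact (inv_visible_lt_C _ HI _ He').
    + rewrite Hl in Ht; discriminate.
  - rewrite (step_other _ _ _ _ Hs Hne) in Hq.
    destruct (step_visible _ _ _ _ Hs He) as [He'|[t' [Ht ->]]].
    + exact (inv_visible_before_reset _ HI _ _ _ _ Hq He' Hx).
    + simpl in Hx. congruence.
Qed.

Lemma S_carries_step p c c' : inv c -> stepP delta p c c' -> carries_response (cS c').
Proof.
  intros HI Hs. pose proof (inv_S_carries _ HI) as H5. unfold carries_response in *.
  case_step Hs Hl; auto; try contradiction. all: right; discriminate.
Qed.

Lemma snap_carries_step p c c' q s : inv c -> stepP delta p c c' ->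
  snap_of (cL c' q) = Some s -> carries_response s.
Proof.
  intros HI Hs Hq. destruct (Nat.eqb_spec q p) as [->|Hne].
  - pose proof (inv_S_carries _ HI). pose proof (inv_snap_carries _ HI p) as H5.
    case_step Hs Hl; rewrite ?upd_eq in Hq; simpl in Hq; simpl_options; try contradiction; auto;
    rewrite Hl in H5; simpl in H5; eauto.
  - rewrite (step_other _ _ _ _ Hs Hne) in Hq. exact (inv_snap_carries _ HI _ _ Hq).
Qed.

(* Line 6 either writes a non-NULL response into the snapshot's slot or finds it non-NULL. *)
Lemma helped_answered_step p c c' q s : inv c -> stepP delta p c c' ->
  helped_snap_of (cL c' q) = Some s -> answered c' (S_entry s).
Proof.
  intros HI Hs Hq. destruct (Nat.eqb_spec q p) as [->|Hne].
  - pose proof (inv_snap_carries _ HI p) as H5. pose proof (inv_helped_answered _ HI p) as H6.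
    pose proof (fun e => step_answered p c c' e HI Hs) as HD.
    case_step Hs Hl; rewrite ?upd_eq in Hq; simpl in Hq; simpl_options; try contradiction;
    rewrite Hl in H5, H6; simpl in H5, H6.
    all: try (apply HD; [eapply (visible_snap c p); rewrite Hl; reflexivity|apply H6; reflexivity]).
    all: unfold answered, deref; simpl; rewrite ?upd_eq; try discriminate.
    + destruct (H5 _ eq_refl) as [Hx|Hx]; simpl in Hx; [discriminate|congruence].
    + auto.
  - rewrite (step_other _ _ _ _ Hs Hne) in Hq. eapply step_answered; eauto.
    + eapply visible_snap, helped_snap_snap; eauto.
    + eapply inv_helped_answered; eauto.
Qed.

Lemma read_ok_step p c c' q : inv c -> stepP delta p c c' -> read_ok c' (cL c' q).
Proof.
  intros HI Hs.
  destruct (Nat.eqb_spec q p) as [->|Hne].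
  - pose proof (inv_read_ok _ HI p) as H7.
    pose proof (fun e => step_answered p c c' e HI Hs) as HD.
    case_step Hs Hl; rewrite ?upd_eq; simpl; auto; try contradiction; rewrite ?Hl in H7; simpl in H7.
    apply HD; [eapply (visible_read_A c p); rewrite Hl; reflexivity|apply H7; auto].
  - rewrite (step_other _ _ _ _ Hs Hne). eapply step_read_ok; eauto. apply inv_read_ok; auto.
Qed.


Lemma inv_step p c c' : inv c -> stepP delta p c c' -> inv c'.
Proof.
  intros HI Hs. constructor.
  - intros; eapply time_lt_C_step; eauto.
  - intros; eapply time_inj_step; eauto.
  - intros; eapply visible_lt_C_step; eauto.
  - intros; eapply visible_before_reset_step; eauto.
  - intros; eapply S_carries_step; eauto.
  - intros; eapply snap_carries_step; eauto.
  - intros; eapply helped_answered_step; eauto.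
  - intros; eapply read_ok_step; eauto.
Qed.

Lemma inv_init s0 H0 : inv (init OP s0 H0).
Proof.
  constructor; simpl; try (intros; discriminate); auto.
  - intros e He. unfold visible in He; simpl in He; destruct_hyps; subst; simpl; auto; discriminate.
  - left; reflexivity.
Qed.


Lemma step_H_cases q c c' r : stepP delta q c c' ->
  cH c' r = cH c r \/ (q = r /\ exists o' t', cL c q = At3 o' t') \/
  (exists ts rs, gcas_eq (cH c r) (ts, RNull) (ts, rs) (cH c' r)).
Proof.
  intros Hs. case_step Hs Hl; auto; try contradiction; case_upd; subst; eauto.
  all: first [ solve [right; left; eauto]
             | solve [right; right; do 2 eexists; left; split; eauto]
             | solve [right; right; do 2 eexists; right; split; eauto] ].
Qed.

Lemma step_A_changed q c c' : stepP delta q c c' -> cA c' <> cA c ->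
  (exists o' t' s, cL c q = At7 o' t' s /\ t' < fst (fst (cA c)) /\ cA c' = (t', AOp o', PH q)) \/
  (exists o' t' s a, cL c q = At13 o' t' s a /\ cA c = a /\ cA c' = (t', AOp o', PH q)).
Proof.
  intros Hs Hne. case_step Hs Hl; try contradiction; try (exfalso; apply Hne; reflexivity).
  - match type of Hne with context [Nat.ltb ?a ?b] => destruct (Nat.ltb_spec a b) end;
      [|exfalso; apply Hne; reflexivity].
    left. eauto 10.
  - right. eauto 10.
Qed.

Lemma step_S_changed q c c' : stepP delta q c c' -> cS c' <> cS c ->
  exists o' t' s a s' r', cL c q = At12 o' t' s a s' r' /\ cS c = s /\
    cS c' = (fst (fst a), s', RVal r', snd a) /\ cL c' q = At4 o' t'.
Proof.
  intros Hs Hne. case_step Hs Hl; try contradiction; try (exfalso; apply Hne; reflexivity).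
  rewrite upd_eq. do 6 eexists; eauto.
Qed.

Lemma step_read_A_of q c c' : stepP delta q c c' ->
  read_A_of (cL c' q) = None \/ read_A_of (cL c' q) = read_A_of (cL c q) \/
  read_A_of (cL c' q) = Some (cA c).
Proof. intros Hs. case_step Hs Hl; rewrite ?upd_eq; simpl; auto; try contradiction; rewrite Hl; auto. Qed.

(* Steps left until the process is next at line 4. *)
Definition loop_distance (l : L) : nat := match l with
 | At5 _ _ => 8 | At6 _ _ _ => 7 | At7 _ _ _ => 6 | At8 _ _ _ => 5 | At9 _ _ _ _ => 4
 | At10 _ _ _ _ _ => 3 | At11 _ _ _ _ => 2 | At3 _ _ | At12 _ _ _ _ _ _ | At13 _ _ _ _ => 1
 | _ => 0 end.

Lemma step_loop_distance p c c' x : stepP delta p c c' -> op_time (cL c p) = Some x ->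
  ~ is_at14 (cL c p) -> 0 < loop_distance (cL c p) -> loop_distance (cL c' p) < loop_distance (cL c p).
Proof.
  intros Hs Ho H14 Hd. case_step Hs Hl; rewrite ?upd_eq; rewrite ?Hl in Ho, H14, Hd; simpl in *;
  try contradiction; try discriminate; try lia; rewrite ?Hl; simpl; lia.
Qed.

Section Execution.
Variables (cfg : nat -> Cf) (sched : nat -> option nat) (s0 : Q) (H0 : nat -> Hval RES).
Hypothesis Hinit : cfg 0 = init OP s0 H0.
Hypothesis Hstep : forall k, stepE delta (sched k) (cfg k) (cfg (S k)).

Lemma exec_step k : cfg (S k) = cfg k \/ exists q, sched k = Some q /\ stepP delta q (cfg k) (cfg (S k)).
Proof. pose proof (Hstep k) as Hs. destruct (sched k) as [q|]; simpl in Hs; eauto. Qed.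

Lemma inv_at k : inv (cfg k).
Proof.
  induction k as [|k IHk]; [rewrite Hinit; apply inv_init|].
  destruct (exec_step k) as [->|[q [_ Hs]]]; [exact IHk|exact (inv_step _ _ _ IHk Hs)].
Qed.

Lemma answered_succ k e : visible (cfg k) e -> answered (cfg k) e -> answered (cfg (S k)) e.
Proof.
  intros Hv Hd. destruct (exec_step k) as [->|[q [_ Hs]]]; auto.
  exact (step_answered _ _ _ _ (inv_at k) Hs Hv Hd).
Qed.

Lemma local_frame k p : sched k <> Some p -> cL (cfg (S k)) p = cL (cfg k) p.
Proof.
  intros Hne. pose proof (Hstep k) as Hs. destruct (sched k) as [q|]; simpl in Hs.
  - eapply step_other; [eauto|congruence].
  - rewrite Hs; auto.
Qed.

Lemma counter_mono j k : j <= k -> cC (cfg j) <= cC (cfg k).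
Proof.
  induction 1 as [|k _ IH]; auto.
  destruct (exec_step k) as [->|[q [_ Hs]]]; [exact IH|].
  pose proof (step_C_mono _ _ _ Hs). lia.
Qed.

Lemma idle_above k : exists N, forall q, N <= q -> cL (cfg k) q = Idle.
Proof.
  induction k as [|k [N HN]]; [exists 0; intros q _; rewrite Hinit; reflexivity|].
  destruct (sched k) as [r|] eqn:E.
  - exists (Nat.max N (S r)). intros q Hq. rewrite local_frame by (rewrite E; intros F; injection F; lia).
    apply HN; lia.
  - exists N. intros q Hq. rewrite local_frame by congruence. auto.
Qed.

Lemma time_of_succ k q t : time_of (cL (cfg (S k)) q) = Some t ->
  time_of (cL (cfg k) q) = Some t \/ t = cC (cfg k).
Proof.
  intros H. destruct (classic (sched k = Some q)) as [E|E].
  - pose proof (Hstep k) as Hs. rewrite E in Hs.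
    destruct (step_time_of _ _ _ Hs) as [A|[A|[_ A]]]; rewrite A in H; try discriminate; auto.
    injection H; auto.
  - rewrite local_frame in H; auto.
Qed.

(* A timestamp below the counter at time [j] was not handed out after [j]. *)
Lemma time_of_back q t j k : j <= k -> time_of (cL (cfg k) q) = Some t -> t < cC (cfg j) ->
  time_of (cL (cfg j) q) = Some t.
Proof.
  induction 1 as [|k Hjk IH]; intros Ht Hlt; auto.
  destruct (time_of_succ _ _ _ Ht) as [A|A]; auto.
  pose proof (counter_mono _ _ Hjk). lia.
Qed.

Definition fair p := forall m, exists k, m <= k /\ sched k = Some p.

Lemma next_step p k : fair p -> exists j, k <= j /\ cL (cfg j) p = cL (cfg k) p /\
  sched j = Some p /\ stepP delta p (cfg j) (cfg (S j)).
Proof.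
  intros Hfair. destruct (Hfair k) as [m [Hkm Hm]].
  assert (Hfirst : forall d k', k' + d = m ->
     exists j, k' <= j /\ cL (cfg j) p = cL (cfg k') p /\ sched j = Some p).
  { induction d as [|d IHd]; intros k' Hd.
    - exists k'. rewrite Nat.add_0_r in Hd. subst. auto.
    - destruct (classic (sched k' = Some p)) as [E|E]; [exists k'; auto|].
      destruct (IHd (S k')) as [j [Hj1 [Hj2 Hj3]]]; [lia|].
      exists j. split; [lia|]. split; [rewrite Hj2; exact (local_frame k' p E)|exact Hj3]. }
  destruct (Hfirst (m - k) k) as [j [Hj1 [Hj2 Hj3]]]; [lia|].
  exists j. repeat split; auto. pose proof (Hstep j) as Hs. rewrite Hj3 in Hs. exact Hs.
Qed.

Definition finishes t := forall p n, time_of (cL (cfg n) p) = Some t -> fair p ->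
  exists k, n <= k /\ sched k = Some p /\ is_at14 (cL (cfg k) p).


Section Stuck.
Variables (p n t : nat) (o : OP).
Hypothesis Hfair : fair p.
Hypothesis Hown : op_time (cL (cfg n) p) = Some (o, t).
Hypothesis Hnever14 : forall k, n <= k -> sched k = Some p -> ~ is_at14 (cL (cfg k) p).

Lemma op_time_stays k : n <= k -> op_time (cL (cfg k) p) = Some (o, t).
Proof.
  induction 1 as [|k Hk IHk]; auto.
  destruct (classic (sched k = Some p)) as [E|E].
  - pose proof (Hstep k) as Hs. rewrite E in Hs. exact (step_op_time _ _ _ _ Hs IHk (Hnever14 k Hk E)).
  - rewrite local_frame; auto.
Qed.

Lemma never_at14 k : n <= k -> ~ is_at14 (cL (cfg k) p).
Proof.
  intros Hk. destruct (next_step p k Hfair) as [j [Hkj [Hj [Hsj _]]]].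
  rewrite <- Hj. apply Hnever14; auto; lia.
Qed.

Lemma reaches_line4 k : n <= k -> exists k', k <= k' /\ cL (cfg k') p = At4 o t.
Proof.
  intros Hk. remember (loop_distance (cL (cfg k) p)) as d eqn:Ed.
  revert k Hk Ed. induction d as [d IHd] using lt_wf_ind. intros k Hk Ed.
  destruct (Nat.eq_dec d 0) as [->|Hd].
  - pose proof (op_time_stays k Hk) as Ho. pose proof (never_at14 k Hk) as H14.
    exists k; split; auto. destruct (cL (cfg k) p); simpl in *; try discriminate; try contradiction;
    injection Ho as -> ->; auto.
  - destruct (next_step p k Hfair) as [j [Hkj [Hj [_ Hs]]]].
    assert (Hlt : loop_distance (cL (cfg (S j)) p) < d).
    { rewrite Ed, <- Hj. eapply step_loop_distance; eauto.
      - apply op_time_stays; lia.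
      - apply never_at14; lia.
      - rewrite Hj. lia. }
    destruct (IHd _ Hlt (S j)) as [k' [Hk1 Hk2]]; auto; try lia.
    exists k'; split; auto; lia.
Qed.

Ltac take_step k Hl :=
  let j := fresh "j" in let Hkj := fresh "Hkj" in let Hj := fresh "Hj" in let Hs := fresh "Hs" in
  destruct (next_step p k Hfair) as [j [Hkj [Hj [_ Hs]]]];
  unfold stepP in Hs; rewrite Hj, Hl in Hs; exists j.

Lemma walk_line4 k : cL (cfg k) p = At4 o t -> exists j, k <= j /\
  ((cH (cfg j) p = (t, RNull) /\ cL (cfg (S j)) p = At5 o t) \/
   (cH (cfg j) p <> (t, RNull) /\ cL (cfg (S j)) p = At14 o t)).
Proof.
  intros Hl. take_step k Hl.
  destruct Hs as [[A B]|[A B]]; rewrite B; simpl; rewrite upd_eq; auto.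
Qed.

Lemma walk_lines5_6 k : cL (cfg k) p = At5 o t ->
  exists j5 j7, k <= j5 < j7 /\ cL (cfg j7) p = At7 o t (cS (cfg j5)).
Proof.
  intros Hl. destruct (next_step p k Hfair) as [j5 [Hk5 [Hj5 [_ Hs5]]]].
  unfold stepP in Hs5. rewrite Hj5, Hl in Hs5.
  assert (A6 : cL (cfg (S j5)) p = At6 o t (cS (cfg j5))) by (rewrite Hs5; simpl; apply upd_eq).
  destruct (next_step p (S j5) Hfair) as [j6 [Hk6 [Hj6 [_ Hs6]]]].
  unfold stepP in Hs6. rewrite Hj6, A6 in Hs6.
  exists j5, (S j6). split; [lia|].
  destruct (cS (cfg j5)) as [[[? ?] ?] [|?]]; [|destruct Hs6 as [? [_ Hs6]]];
    rewrite Hs6; simpl; apply upd_eq.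
Qed.

Lemma walk_line7 k s : cL (cfg k) p = At7 o t s -> exists j, k <= j /\
  cL (cfg (S j)) p = At8 o t s /\
  cA (cfg (S j)) = if t <? fst (fst (cA (cfg j))) then (t, AOp o, PH p) else cA (cfg j).
Proof.
  intros Hl. take_step k Hl. destruct (cA (cfg j)) as [[? ?] ?]. rewrite Hs; simpl; rewrite upd_eq; auto.
Qed.

Lemma walk_lines8_9 k s : cL (cfg k) p = At8 o t s -> exists j8 j9, k <= j8 < j9 /\
  cL (cfg (S j9)) p = At10 o t s (cA (cfg j8)) (deref (cfg j9) (snd (cA (cfg j8)))).
Proof.
  intros Hl. destruct (next_step p k Hfair) as [j8 [Hk8 [Hj8 [_ Hs8]]]].
  unfold stepP in Hs8. rewrite Hj8, Hl in Hs8.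
  assert (A9 : cL (cfg (S j8)) p = At9 o t s (cA (cfg j8))) by (rewrite Hs8; simpl; apply upd_eq).
  destruct (next_step p (S j8) Hfair) as [j9 [Hk9 [Hj9 [_ Hs9]]]].
  unfold stepP in Hs9. rewrite Hj9, A9 in Hs9.
  exists j8, j9. split; [lia|].
  destruct (cA (cfg j8)) as [[? ?] ?]. rewrite Hs9; simpl; apply upd_eq.
Qed.

Lemma walk_line10 k s a hv : cL (cfg k) p = At10 o t s a hv -> exists j, k <= j /\
  ((hv = (fst (fst a), RNull) /\ cL (cfg (S j)) p = At11 o t s a) \/
   (hv <> (fst (fst a), RNull) /\ cL (cfg (S j)) p = At13 o t s a)).
Proof.
  intros Hl. take_step k Hl. split; [lia|].
  destruct a as [[? ?] ?]. destruct Hs as [[? Hs]|[? Hs]]; rewrite Hs; simpl; rewrite upd_eq; auto.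
Qed.

Lemma walk_line11 k s a : cL (cfg k) p = At11 o t s a -> exists j s' r', k <= j /\
  cL (cfg (S j)) p = At12 o t s a s' r'.
Proof.
  intros Hl. take_step k Hl.
  destruct a as [[? [|?]] ?]; destruct s as [[[? ?] ?] ?]; try contradiction.
  destruct Hs as [s' [r' [_ Hs]]]. exists s', r'. split; [lia|]. rewrite Hs; simpl; apply upd_eq.
Qed.

Lemma walk_line12 k s a s' r' : cL (cfg k) p = At12 o t s a s' r' -> exists j, k <= j /\
  ((cS (cfg j) = s /\ cS (cfg (S j)) = (fst (fst a), s', RVal r', snd a)) \/ cS (cfg j) <> s).
Proof.
  intros Hl. take_step k Hl. split; [lia|].
  destruct a as [[? ?] ?]. destruct Hs as [nS [[[-> ->]|[? ->]] Hs]]; rewrite Hs; auto.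
Qed.

Lemma walk_line13 k s a : cL (cfg k) p = At13 o t s a -> exists j, k <= j /\
  ((cA (cfg j) = a /\ cA (cfg (S j)) = (t, AOp o, PH p)) \/ cA (cfg j) <> a).
Proof.
  intros Hl. take_step k Hl. split; [lia|].
  destruct Hs as [nA [[[-> ->]|[? ->]] Hs]]; rewrite Hs; auto.
Qed.


Section AfterLine4.
Variable n4 : nat.
Hypothesis Hn4 : n <= n4.
Hypothesis Hat4 : cL (cfg n4) p = At4 o t.

Definition own_answered k := answered (cfg k) (t, PH p).

Lemma not_at_line3 k : n4 <= k -> cL (cfg k) p <> At3 o t.
Proof.
  induction 1 as [|k Hk IHk]; [rewrite Hat4; discriminate|].
  destruct (classic (sched k = Some p)) as [E|E]; [|rewrite local_frame; auto].
  pose proof (Hstep k) as Hs. rewrite E in Hs. intros F.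
  destruct (step_to_line3 _ _ _ _ _ Hs F) as [A _].
  pose proof (op_time_stays k ltac:(lia)) as Ho. rewrite A in Ho. discriminate.
Qed.

(* After line 3, only GCAS(=, H_p, (_, NULL), _) at line 6 writes to H_p. *)
Lemma own_answered_succ k : n4 <= k -> own_answered k -> own_answered (S k).
Proof.
  unfold own_answered, answered, deref; simpl. intros Hk HD.
  destruct (exec_step k) as [->|[q [_ Hs]]]; auto.
  destruct (step_H_cases _ _ _ p Hs) as [A|[[-> [o' [t' A]]]|[ts [rs [[A1 A2]|[A1 A2]]]]]].
  - rewrite A; auto.
  - pose proof (op_time_stays k ltac:(lia)) as Ho. rewrite A in Ho.
    injection Ho as -> ->. exfalso; eapply not_at_line3; eauto.
  - rewrite A2. rewrite A1 in HD. intros F; injection F as -> ->. auto.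
  - rewrite A2; auto.
Qed.

Lemma own_answered_mono j k : n4 <= j -> j <= k -> own_answered j -> own_answered k.
Proof. intros Hj. induction 1; auto. intros HD. apply own_answered_succ; auto. lia. Qed.

Lemma own_unanswered k : n4 <= k -> ~ own_answered k.
Proof.
  intros Hk HD.
  destruct (reaches_line4 k ltac:(lia)) as [k4 [Hk4 A4]].
  destruct (walk_line4 k4 A4) as [j [Hj [[A _]|[_ A14]]]].
  - apply (own_answered_mono k j Hk ltac:(lia) HD). unfold answered, deref; simpl. rewrite A. auto.
  - apply (never_at14 (S j)); [lia|]. rewrite A14. exact I.
Qed.

Lemma reaches_line5 k : n4 <= k -> exists k', k <= k' /\ cL (cfg k') p = At5 o t.
Proof.
  intros Hk.
  destruct (reaches_line4 k ltac:(lia)) as [k4 [Hk4 A4]].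
  destruct (walk_line4 k4 A4) as [j [Hj [[_ A5]|[A _]]]].
  - exists (S j). split; [lia|exact A5].
  - exfalso. apply (own_unanswered j); [lia|]. exact A.
Qed.

Section OlderRivals.
Hypothesis IH : forall t', t' < t -> finishes t'.

Lemma time_lt_C_n4 : t < cC (cfg n4).
Proof. apply (inv_time_lt_C _ (inv_at n4) p). rewrite Hat4. reflexivity. Qed.

(* Timestamps are never reused, so each one below [t] is eventually held by no scheduled process. *)
Lemma old_time_retires m : m < t -> exists T, n4 <= T /\
  forall k q, T <= k -> sched k = Some q -> time_of (cL (cfg k) q) <> Some m.
Proof.
  intros Hmt. pose proof time_lt_C_n4 as HtC.
  assert (Hback : forall k q, n4 <= k -> time_of (cL (cfg k) q) = Some m ->
             time_of (cL (cfg n4) q) = Some m).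
  { intros k q Hk Hq. eapply time_of_back; eauto. lia. }
  destruct (classic (exists q0, time_of (cL (cfg n4) q0) = Some m)) as [[q0 Hq0]|Hnone].
  2: { exists n4. split; auto. intros k q Hk _ Hq. apply Hnone. eauto. }
  assert (Hq0_only : forall k q, n4 <= k -> time_of (cL (cfg k) q) = Some m -> q = q0).
  { intros k q Hk Hq. exact (inv_time_inj _ (inv_at n4) _ _ _ (Hback k q Hk Hq) Hq0). }
  destruct (classic (fair q0)) as [Hfair0|Hunfair0].
  - destruct (IH m Hmt q0 n4 Hq0 Hfair0) as [kq [Hkq [Hsq H14]]].
    assert (Hidle : cL (cfg (S kq)) q0 = Idle).
    { pose proof (Hstep kq) as Hs. rewrite Hsq in Hs. simpl in Hs. unfold stepP in Hs.
      destruct (cL (cfg kq) q0); simpl in H14; try contradiction. rewrite Hs. simpl. apply upd_eq. }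
    exists (S kq). split; [lia|]. intros k q Hk _ Hq.
    pose proof (Hq0_only k q ltac:(lia) Hq) as ->.
    assert (Hb : time_of (cL (cfg (S kq)) q0) = Some m).
    { eapply time_of_back; [| apply Hq |]. lia. pose proof (counter_mono n4 (S kq) ltac:(lia)). lia. }
    rewrite Hidle in Hb. discriminate.
  - apply not_all_ex_not in Hunfair0. destruct Hunfair0 as [M HM].
    exists (Nat.max n4 M). split; [lia|]. intros k q Hk Hs Hq.
    pose proof (Hq0_only k q ltac:(lia) Hq) as ->.
    apply HM. exists k. split; [lia|exact Hs].
Qed.

Lemma older_rivals_retire : exists T0, n4 <= T0 /\ forall k q t', T0 <= k -> q <> p ->
  sched k = Some q -> time_of (cL (cfg k) q) = Some t' -> t < t'.
Proof.
  assert (Hbelow : forall m, m <= t -> exists T, n4 <= T /\ forall k q t', T <= k ->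
            sched k = Some q -> time_of (cL (cfg k) q) = Some t' -> t' < m -> False).
  { induction m as [|m IHm]; intros Hm.
    - exists n4. split; auto. intros; lia.
    - destruct (IHm ltac:(lia)) as [T [HT HTm]].
      destruct (old_time_retires m ltac:(lia)) as [T' [HT' HT'm]].
      exists (Nat.max T T'). split; [lia|]. intros k q t' Hk Hs Hq Ht'.
      destruct (Nat.eq_dec t' m) as [->|Hne].
      + exact (HT'm k q ltac:(lia) Hs Hq).
      + exact (HTm k q t' ltac:(lia) Hs Hq ltac:(lia)). }
  destruct (Hbelow t (le_n t)) as [T [HT HTt]]. exists T. split; auto.
  intros k q t' Hk Hq Hs Ht'.
  destruct (lt_eq_lt_dec t t') as [[H|H]|H]; auto.
  - subst t'. exfalso. apply Hq. apply (inv_time_inj _ (inv_at k) _ _ _ Ht').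
    eapply op_time_time_of. apply op_time_stays. lia.
  - exfalso. exact (HTt k q t' Hk Hs Ht' H).
Qed.

End OlderRivals.


Section FrozenA.
Variables (E : Aval OP) (T1 : nat).
Hypothesis HT1 : n4 <= T1.
Hypothesis HE : forall k, T1 <= k -> cA (cfg k) = E /\ ~ answered (cfg k) (A_entry E).

(* If S held E's operation, S could no longer change, and p's next snapshot would answer it at line 6. *)
Lemma S_entry_not_frozen j : T1 <= j -> S_entry (cS (cfg j)) <> A_entry E.
Proof.
  intros Hj HSj.
  assert (Hconst : forall k, j <= k -> cS (cfg k) = cS (cfg j)).
  { induction 1 as [|k Hk IHk]; auto.
    destruct (exec_step k) as [->|[q [_ Hs]]]; auto.
    destruct (classic (cS (cfg (S k)) = cS (cfg k))) as [B|B]; [congruence|].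
    destruct (step_S_changed _ _ _ Hs B) as [o' [t' [s [a [s' [r' [C1 [C2 _]]]]]]]].
    exfalso. apply (proj2 (HE k ltac:(lia))).
    pose proof (inv_helped_answered _ (inv_at k) q s) as H6. rewrite C1 in H6. specialize (H6 eq_refl).
    rewrite <- C2, IHk, HSj in H6. exact H6. }
  destruct (reaches_line5 j ltac:(lia)) as [k5 [Hk5 A5]].
  destruct (walk_lines5_6 k5 A5) as [j5 [j7 [Hj57 A7]]].
  pose proof (inv_helped_answered _ (inv_at j7) p (cS (cfg j5))) as H6.
  rewrite A7 in H6. specialize (H6 eq_refl).
  apply (proj2 (HE j7 ltac:(lia))). rewrite (Hconst j5), HSj in H6 by lia. exact H6.
Qed.

Section StaleReads.
Variable N : nat.
Hypothesis HN : forall q, N <= q -> cL (cfg T1) q = Idle.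

Definition stale_read k q := exists a, read_A_of (cL (cfg k) q) = Some a /\ a <> E.

Lemma stale_read_pred k q : T1 <= k -> stale_read (S k) q -> stale_read k q.
Proof.
  intros Hk [a [Ha Hne]].
  destruct (exec_step k) as [A|[q' [_ Hs]]]; [rewrite A in Ha; exists a; auto|].
  destruct (Nat.eq_dec q' q) as [->|Hqq].
  - destruct (step_read_A_of _ _ _ Hs) as [B|[B|B]]; rewrite B in Ha.
    + discriminate.
    + exists a; auto.
    + injection Ha as <-. exfalso. apply Hne. apply (HE k Hk).
  - rewrite (step_other _ _ _ _ Hs) in Ha by auto. exists a; auto.
Qed.

Lemma stale_read_below k q : T1 <= k -> stale_read k q -> q < N.
Proof.
  induction 1 as [|k Hk IHk]; intros Hst.
  - destruct (le_lt_dec N q) as [Hq|Hq]; auto.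
    destruct Hst as [a [Ha _]]. rewrite HN in Ha by auto. discriminate.
  - apply IHk. apply stale_read_pred; auto.
Qed.

Definition stale_count k := count_below (stale_read k) N.

Lemma stale_count_succ k : T1 <= k -> stale_count (S k) <= stale_count k.
Proof. intros Hk. apply count_below_mono. intros q _ H. apply stale_read_pred; auto. Qed.

(* A successful line 12 installs the operation read from A, so its author's read was stale. *)
Lemma stale_count_S_changed k : T1 <= k -> cS (cfg (S k)) <> cS (cfg k) ->
  stale_count (S k) < stale_count k.
Proof.
  intros Hk HS.
  destruct (exec_step k) as [A|[q [_ Hs]]]; [rewrite A in HS; congruence|].
  destruct (step_S_changed _ _ _ Hs HS) as [o' [t' [s [a [s' [r' [C1 [C2 [C3 C4]]]]]]]]].
  assert (Hst : stale_read k q).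
  { exists a. rewrite C1. split; auto. intros ->. apply (S_entry_not_frozen (S k)); [lia|].
    rewrite C3. reflexivity. }
  apply (count_below_lt _ _ _ q).
  - intros q' _ H. apply stale_read_pred; auto.
  - eapply stale_read_below; eauto.
  - exact Hst.
  - intros [a' [Ha' _]]. rewrite C4 in Ha'. discriminate.
Qed.

Lemma stale_count_range a b : T1 <= a -> a <= b ->
  stale_count b <= stale_count a /\ (cS (cfg b) <> cS (cfg a) -> stale_count b < stale_count a).
Proof.
  intros Ha. induction 1 as [|b Hb [IHle IHlt]].
  - split; auto. intros H; congruence.
  - pose proof (stale_count_succ b ltac:(lia)).
    split; [lia|]. intros HS.
    destruct (classic (cS (cfg (S b)) = cS (cfg b))) as [B|B].
    + rewrite B in HS. specialize (IHlt HS). lia.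
    + pose proof (stale_count_S_changed b ltac:(lia) B). lia.
Qed.

(* p reads E from A, finds it unanswered and tries to install it in S; this must fail. *)
Lemma loop_lowers_stale_count k : T1 <= k -> cL (cfg k) p = At5 o t ->
  exists k', k < k' /\ cL (cfg k') p = At5 o t /\ stale_count k' < stale_count k.
Proof.
  intros Hk A5.
  destruct (walk_lines5_6 k A5) as [j5 [j7 [Hj57 A7]]].
  destruct (walk_line7 j7 _ A7) as [j [Hj [A8 _]]].
  destruct (walk_lines8_9 (S j) _ A8) as [j8 [j9 [Hj89 A10]]].
  rewrite (proj1 (HE j8 ltac:(lia))) in A10.
  assert (Hunans : deref (cfg j9) (snd E) = (fst (fst E), RNull)).
  { apply NNPP. exact (proj2 (HE j9 ltac:(lia))). }
  rewrite Hunans in A10.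
  destruct (walk_line10 _ _ _ _ A10) as [j10 [Hj10 [[_ A11]|[F _]]]]; [|contradiction F; reflexivity].
  destruct (walk_line11 _ _ _ A11) as [j11 [s' [r' [Hj11 A12]]]].
  destruct (walk_line12 _ _ _ _ _ A12) as [j12 [Hj12 [[_ B]|B]]].
  { exfalso. apply (S_entry_not_frozen (S j12)); [lia|]. rewrite B. reflexivity. }
  destruct (reaches_line5 (S j12) ltac:(lia)) as [k' [Hk' A5']].
  exists k'. split; [lia|]. split; [exact A5'|].
  pose proof (proj1 (stale_count_range k j5 ltac:(lia) ltac:(lia))).
  pose proof (proj2 (stale_count_range j5 j12 ltac:(lia) ltac:(lia)) B).
  pose proof (proj1 (stale_count_range j12 k' ltac:(lia) ltac:(lia))).
  lia.
Qed.

End StaleReads.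

Lemma frozen_A_absurd : False.
Proof.
  destruct (idle_above T1) as [N HN].
  destruct (reaches_line5 T1 HT1) as [k0 [Hk0 A5]].
  assert (Hdescent : forall m k, T1 <= k -> cL (cfg k) p = At5 o t -> stale_count N k = m -> False).
  { induction m as [m IHm] using lt_wf_ind. intros k Hk Ak Hm.
    destruct (loop_lowers_stale_count N HN k Hk Ak) as [k' [Hk' [Ak' Hlt]]].
    apply (IHm (stale_count N k') ltac:(lia) k'); auto. lia. }
  eapply Hdescent; eauto.
Qed.

End FrozenA.

Section YoungerRivals.
Variable T0 : nat.
Hypothesis HT0 : n4 <= T0.
Hypothesis Hyounger : forall k q t', T0 <= k -> q <> p -> sched k = Some q ->
  time_of (cL (cfg k) q) = Some t' -> t < t'.

Definition own_A : Aval OP := (t, AOp o, PH p).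

Lemma A_written_at k : cA (cfg (S k)) <> cA (cfg k) -> exists q, sched k = Some q /\
  ((exists o' t' s, cL (cfg k) q = At7 o' t' s /\ t' < fst (fst (cA (cfg k))) /\
                    cA (cfg (S k)) = (t', AOp o', PH q)) \/
   (exists o' t' s a, cL (cfg k) q = At13 o' t' s a /\ cA (cfg k) = a /\
                      cA (cfg (S k)) = (t', AOp o', PH q))).
Proof.
  intros H. destruct (exec_step k) as [A|[q [Hq Hs]]]; [rewrite A in H; congruence|].
  exists q; split; auto. eapply step_A_changed; eauto.
Qed.

Lemma writer_time k q o' t' (l : L) : T0 <= k -> sched k = Some q -> cL (cfg k) q = l ->
  op_time l = Some (o', t') -> (q = p /\ o' = o /\ t' = t) \/ t < t'.
Proof.
  intros Hk Hq Hl Ho. destruct (Nat.eq_dec q p) as [->|Hne].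
  - left. pose proof (op_time_stays k ltac:(lia)) as Hown'. rewrite Hl, Ho in Hown'.
    injection Hown' as -> ->. auto.
  - right. eapply Hyounger; eauto. rewrite Hl. eapply op_time_time_of; eauto.
Qed.

Lemma A_low_time k : T0 <= k -> fst (fst (cA (cfg k))) <= t ->
  cA (cfg k) = own_A \/ forall j, T0 <= j <= k -> cA (cfg j) = cA (cfg T0).
Proof.
  induction 1 as [|k Hk IHk]; intros Ht.
  - right. intros j Hj. assert (j = T0) as -> by lia. auto.
  - destruct (classic (cA (cfg (S k)) = cA (cfg k))) as [B|B].
    + rewrite B in Ht |- *. destruct (IHk Ht) as [C|C]; auto.
      right. intros j Hj. destruct (Nat.eq_dec j (S k)) as [->|Hne]; [rewrite B; apply C; lia|].
      apply C; lia.
    + destruct (A_written_at k B) as [q [Hq [[o' [t' [s [C1 [C2 C3]]]]]|[o' [t' [s [a [C1 [C2 C3]]]]]]]]];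
      rewrite C3 in Ht |- *; simpl in Ht;
      (destruct (writer_time k q o' t' _ Hk Hq C1 eq_refl) as [[-> [-> ->]]|F]; [left; reflexivity|lia]).
Qed.

(* Line 7 only installs older operations, and line 13 needs own_A answered. *)
Lemma own_A_persists k : T0 <= k -> cA (cfg k) = own_A -> cA (cfg (S k)) = own_A.
Proof.
  intros Hk HA. apply NNPP. intros B. rewrite <- HA in B.
  destruct (A_written_at k B) as [q [Hq [[o' [t' [s [C1 [C2 C3]]]]]|[o' [t' [s [a [C1 [C2 C3]]]]]]]]].
  - rewrite HA in C2. simpl in C2.
    destruct (writer_time k q o' t' _ Hk Hq C1 eq_refl) as [[_ [_ ->]]|F]; lia.
  - pose proof (inv_read_ok _ (inv_at k) q) as H7. rewrite C1 in H7. simpl in H7.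
    rewrite <- C2, HA in H7. exact (own_unanswered k ltac:(lia) H7).
Qed.

Section NeverOwn.
Hypothesis Hno : forall k, T0 <= k -> cA (cfg k) <> own_A.

Lemma A_constant k : T0 <= k -> cA (cfg k) = cA (cfg T0).
Proof.
  intros Hk.
  destruct (reaches_line5 k ltac:(lia)) as [k5 [Hk5 A5]].
  destruct (walk_lines5_6 k5 A5) as [j5 [j7 [Hj57 A7]]].
  destruct (walk_line7 j7 _ A7) as [j [Hj [_ B]]].
  destruct (Nat.ltb_spec t (fst (fst (cA (cfg j))))) as [C|C].
  - exfalso. exact (Hno (S j) ltac:(lia) B).
  - destruct (A_low_time j ltac:(lia) C) as [D|D].
    + exfalso. exact (Hno j ltac:(lia) D).
    + apply D; lia.
Qed.

(* Otherwise p would find it answered and replace it by own_A at line 13. *)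
Lemma A_stays_unanswered k : T0 <= k -> ~ answered (cfg k) (A_entry (cA (cfg T0))).
Proof.
  intros Hk Hans. set (X0 := cA (cfg T0)) in *.
  assert (Hans_all : forall k', k <= k' -> answered (cfg k') (A_entry X0)).
  { induction 1 as [|k' Hk' IH]; auto.
    apply answered_succ; auto. left. rewrite A_constant by lia. reflexivity. }
  destruct (reaches_line5 k ltac:(lia)) as [k5 [Hk5 A5]].
  destruct (walk_lines5_6 k5 A5) as [j5 [j7 [Hj57 A7]]].
  destruct (walk_line7 j7 _ A7) as [j [Hj [A8 _]]].
  destruct (walk_lines8_9 (S j) _ A8) as [j8 [j9 [Hj89 A10]]].
  rewrite (A_constant j8 ltac:(lia)) in A10.
  destruct (walk_line10 _ _ _ _ A10) as [j10 [Hj10 [[F _]|[_ A13]]]].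
  { exact (Hans_all j9 ltac:(lia) F). }
  destruct (walk_line13 _ _ _ A13) as [j13 [Hj13 [[_ B]|B]]].
  - exact (Hno (S j13) ltac:(lia) B).
  - exact (B (A_constant j13 ltac:(lia))).
Qed.

End NeverOwn.

Lemma A_eventually_own : exists k1, T0 <= k1 /\ cA (cfg k1) = own_A.
Proof.
  apply NNPP. intros Hnone.
  assert (Hno : forall k, T0 <= k -> cA (cfg k) <> own_A) by (intros k Hk HA; apply Hnone; eauto).
  apply (frozen_A_absurd (cA (cfg T0)) T0 HT0). intros k Hk. split.
  - exact (A_constant Hno k Hk).
  - exact (A_stays_unanswered Hno k Hk).
Qed.

Lemma younger_rivals_absurd : False.
Proof.
  destruct A_eventually_own as [k1 [Hk1 HA]].
  assert (Hall : forall k, k1 <= k -> cA (cfg k) = own_A).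
  { induction 1; auto. apply own_A_persists; auto. lia. }
  apply (frozen_A_absurd own_A k1 ltac:(lia)). intros k Hk. split; [apply Hall; auto|].
  exact (own_unanswered k ltac:(lia)).
Qed.

End YoungerRivals.

Lemma stuck_after_line4_absurd : (forall t', t' < t -> finishes t') -> False.
Proof.
  intros IH. destruct (older_rivals_retire IH) as [T0 [HT0 Hyounger]].
  exact (younger_rivals_absurd T0 HT0 Hyounger).
Qed.

End AfterLine4.

Lemma stuck_absurd : (forall t', t' < t -> finishes t') -> False.
Proof.
  destruct (reaches_line4 n (le_n n)) as [n4 [Hn4 Hat4]].
  exact (stuck_after_line4_absurd n4 Hn4 Hat4).
Qed.

End Stuck.

Lemma finishes_all t : finishes t.
Proof.
  induction t as [t IH] using lt_wf_ind.
  intros p n Ht Hfair. apply NNPP. intros Hnot.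
  destruct (time_of_op_time _ _ Ht) as [o Ho].
  apply (stuck_absurd p n t o Hfair Ho); [|exact IH].
  intros k Hk Hs H14. apply Hnot. eauto.
Qed.

(* A process at line 2 is one step away from holding a timestamp. *)
Lemma wait_free p n : cL (cfg n) p <> Idle -> fair p ->
  exists k, n <= k /\ sched k = Some p /\ is_at14 (cL (cfg k) p).
Proof.
  intros Hn Hfair.
  destruct (time_of (cL (cfg n) p)) as [t|] eqn:Ht; [exact (finishes_all t p n Ht Hfair)|].
  destruct (cL (cfg n) p) as [|o| | | | | | | | | | | |] eqn:Hl; simpl in Ht;
    try discriminate; [contradiction|].
  destruct (next_step p n Hfair) as [j [Hj1 [Hj2 [_ Hs]]]].
  unfold stepP in Hs. rewrite Hj2, Hl in Hs.
  assert (Ht' : time_of (cL (cfg (S j)) p) = Some (cC (cfg j)))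
    by (rewrite Hs; simpl; rewrite upd_eq; reflexivity).
  destruct (finishes_all _ p (S j) Ht' Hfair) as [k [Hk1 Hk2]].
  exists k. split; [lia|auto].
Qed.

End Execution.
End AlgorithmU.

Theorem mainTheorem1 (OP RES Q : Type) (delta : Q -> OP -> Q -> RES -> Prop)
  (s0 : Q) (H0 : nat -> Hval RES)
  (cfg : nat -> config OP RES Q) (sched : nat -> option nat) :
  cfg 0 = init OP s0 H0 ->
  (forall k, stepE delta (sched k) (cfg k) (cfg (S k))) ->
  forall (p n : nat),
    cL (cfg n) p <> Idle OP RES Q ->
    (forall m, exists k, m <= k /\ sched k = Some p) ->
    exists k, n <= k /\ sched k = Some p /\ is_at14 (cL (cfg k) p).
Proof.
  intros Hinit Hstep p n Hn Hfair.
  exact (wait_free OP RES Q delta cfg sched s0 H0 Hinit Hstep p n Hn Hfair).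
Qed.
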